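(* Let $Y$ be uniformly distributed on a finite set $\mathcal{Y}=\{y_1,\dots,y_m\}\subset\mathbb{R}$ of $m$ distinct values ($m\in\mathbb{N}$ arbitrary), and let $k\ge 0$ be the number of shared key bits. Then: (1) there exists an encoding scheme (with $r=m$ transmission symbols) whose eavesdropper distortion $D_{ach}(k)$ satisfies $$\Delta = D_{max}-D_{ach}(k)\le \frac{D_{max}}{2^k};$$ (2) with $d=\max_{y_i,y_j\in\mathcal{Y}}(y_i-y_j)$, there exists an encoding scheme (with $r=m$ transmission symbols) whose eavesdropper distortion satisfies $$\Delta = D_{max}-D_{ach}(k)\le \frac{d^2}{2^{2k}}.$$
   Context: Single-source setting. $Y$ is a real random variable taking values in a finite set $\mathcal{Y}=\{y_1,\dots,y_m\}\subset\mathbb{R}$ of distinct values. A source and a receiver share a secret key $K$, uniform on $\{1,\dots,2^k\}$ and independent of $Y$. An encoding scheme consists of a finite set of transmission symbols $\{\tau_1,\dots,\tau_r\}$ together with, for each key value $i\in\{1,\dots,2^k\}$, an injective map $\sigma_i:\mathcal{Y}\to\{\tau_1,\dots,\tau_r\}$ (injectivity guarantees that the receiver, knowing $K$, recovers $Y$ exactly); the source transmits $T=\sigma_K(Y)$. An eavesdropper observes $T$ but not $K$. Her distortion is $D_{ach}(k)=\min_{\hat f}\mathbb{E}[(Y-\hat f(T))^2]$, the minimum over all functions $\hat f$ of the observed symbol, and $D_{max}=\mathrm{var}(Y)$. Write $\Delta=D_{max}-D_{ach}(k)$. *)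

From HB Require Import structures.
From mathcomp Require Import all_boot all_order all_algebra.
Set Implicit Arguments. Unset Strict Implicit. Unset Printing Implicit Defensive.
Import Order.TTheory GRing.Theory Num.Theory.
Local Open Scope ring_scope.

(* Y is uniform on { y i | i : 'I_m }, y injective; the key K is uniform on
   'I_(2^k) (i.e. {1..2^k} shifted), independent of Y. *)

Definition is_scheme (m k r : nat) (sigma : 'I_(2 ^ k) -> 'I_m -> 'I_r) : Prop :=
  forall key, injective (sigma key).

(* E[(Y - fhat T)^2] for the joint uniform distribution of (Y, K). *)
Definition distortion (R : realFieldType) (m k r : nat) (y : 'I_m -> R)
    (sigma : 'I_(2 ^ k) -> 'I_m -> 'I_r) (fhat : 'I_r -> R) : R :=
  (m%:R * (2 ^ k)%N%:R)^-1 *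
    \sum_(i < m) \sum_(key < 2 ^ k) (y i - fhat (sigma key i)) ^+ 2.

Definition is_Dach (R : realFieldType) (m k r : nat) (y : 'I_m -> R)
    (sigma : 'I_(2 ^ k) -> 'I_m -> 'I_r) (D : R) : Prop :=
  (exists fhat : 'I_r -> R, distortion y sigma fhat = D) /\
  (forall fhat : 'I_r -> R, D <= distortion y sigma fhat).

Definition meanY (R : realFieldType) (m : nat) (y : 'I_m -> R) : R :=
  m%:R^-1 * \sum_(i < m) y i.

Definition Dmax (R : realFieldType) (m : nat) (y : 'I_m -> R) : R :=
  m%:R^-1 * \sum_(i < m) (y i - meanY y) ^+ 2.

(* d = max_{i,j} (y_i - y_j); the 0 default is harmless since the diagonal
   terms are 0 and m > 0. *)
Definition diam (R : realFieldType) (m : nat) (y : 'I_m -> R) : R :=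
  \big[Num.max/0]_(i < m) \big[Num.max/0]_(j < m) (y i - y j).

From HB Require Import structures.
From mathcomp Require Import all_boot all_order all_algebra all_fingroup ring lra.
Import Order.TTheory GRing.Theory Num.Theory.
Local Open Scope ring_scope.
Set Implicit Arguments. Unset Strict Implicit.

(* Index the 2^k keys by a list s of permutations of the alphabet and send
   p^-1 Y under the key p.  On observing t the eavesdropper knows that Y = y (p t)
   for p uniform in s, so her best estimate is the posterior mean and her gain
   Delta is the variance of the posterior mean.  Doubling the key set from s to
   s ++ pi s, where pi pairs symbols with large posterior mean with symbols with
   small posterior mean, replaces the posterior mean g by (g + g o pi) / 2; by
   Chebyshev's sum inequality this at least halves its variance, and it halves
   its spread.  After k doublings Delta <= D_max / 2^k, and all posterior means
   lie within d / 2^k of each other, whence Delta <= (d / 2^k)^2. *)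

Section Rearrangement.
Variables (R : realFieldType) (m : nat).
Implicit Types (w u v : 'I_m -> R).

Definition antisorted w (pi : {perm 'I_m}) :=
  forall t t', (w t - w t') * (w (pi t) - w (pi t')) <= 0.

Lemma exists_sorting_perm w :
  exists rho : {perm 'I_m}, forall i j : 'I_m, (i <= j)%N -> w (rho i) <= w (rho j).
Proof.
set le_w := fun i j : 'I_m => w i <= w j.
have /tuple_permP[rho sort_rho] : perm_eq (sort le_w (enum 'I_m)) (ord_tuple m).
  by rewrite perm_sort.
have sorted_rho : sorted (relpre rho le_w) (enum 'I_m).
  have -> : enum 'I_m = val (ord_tuple m) by rewrite /= enumT unlock.
  rewrite -sorted_map.
  have -> : [seq rho i | i <- ord_tuple m] = sort le_w (enum 'I_m).
    by rewrite sort_rho /= enumT unlock; apply: eq_map => i; rewrite tnth_ord_tuple.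
  by apply: sort_sorted => i j; exact: le_total.
exists rho => i j le_ij.
have le_trans_rho : transitive (relpre rho le_w) by move=> b a c; exact: le_trans.
have le_refl_rho : reflexive (relpre rho le_w) by move=> a; exact: lexx.
move: (sorted_leq_nth le_trans_rho le_refl_rho i sorted_rho) => /(_ i j).
by rewrite !inE size_enum_ord !nth_ord_enum; apply.
Qed.

(* Conjugating the reversal of 'I_m by a sorting permutation pairs the i-th
   smallest value of w with the i-th largest. *)
Lemma exists_antisorting_perm w : exists pi : {perm 'I_m}, antisorted w pi.
Proof.
have [rho rho_sorts] := exists_sorting_perm w.
set pi := (rho^-1 * perm (@rev_ord_inj m) * rho)%g.
have pi_rho i : pi (rho i) = rho (rev_ord i) by rewrite !permM permK permE.
exists pi => t t'; rewrite -[t](permKV rho) -[t'](permKV rho) !pi_rho.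
move: (rho^-1 t)%g (rho^-1 t')%g => i j.
have rev_anti (a b : 'I_m) : (a <= b)%N -> (rev_ord b <= rev_ord a)%N.
  by move=> le_ab /=; apply: leq_sub2l; rewrite ltnS.
have [le_ij | /ltnW le_ji] := leqP i j.
- apply: mulr_le0_ge0; first by rewrite subr_le0 rho_sorts.
  by rewrite subr_ge0 rho_sorts ?rev_anti.
- apply: mulr_ge0_le0; first by rewrite subr_ge0 rho_sorts.
  by rewrite subr_le0 rho_sorts ?rev_anti.
Qed.

Lemma chebyshev_sum_antitone u v :
  (forall i j, (u i - u j) * (v i - v j) <= 0) ->
  m%:R * \sum_i u i * v i <= (\sum_i u i) * (\sum_i v i).
Proof.
move=> uv_anti.
set A := \sum_i u i; set B := \sum_i v i; set C := \sum_i u i * v i.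
have row_sum i : \sum_j (u i - u j) * (v i - v j) =
    m%:R * (u i * v i) - u i * B - A * v i + C.
  have expand j : (u i - u j) * (v i - v j) =
      u i * v i - u i * v j - u j * v i + u j * v j by ring.
  rewrite (eq_bigr _ (fun j _ => expand j)) !big_split /= !sumrN sumr_const card_ord.
  by rewrite -mulr_sumr -mulr_suml mulr_natl.
have : \sum_i \sum_j (u i - u j) * (v i - v j) <= 0.
  by apply: sumr_le0 => i _; apply: sumr_le0 => j _; exact: uv_anti.
rewrite (eq_bigr _ (fun i _ => row_sum i)) !big_split /= !sumrN sumr_const card_ord.
rewrite -mulr_sumr -mulr_suml -mulr_sumr -/A -/B -/C mulr_natl.
clearbody A B C; lra.
Qed.

Lemma antisorted_average_spread w pi L : antisorted w pi ->
  (forall t t', w t - w t' <= L) ->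
  forall t t', (w t + w (pi t)) / 2 - (w t' + w (pi t')) / 2 <= L / 2.
Proof.
move=> anti spread t t'.
have [le_w | lt_w] := leP (w t) (w t').
  by have := spread (pi t) (pi t'); lra.
have : w (pi t) - w (pi t') <= 0.
  have gt0 : 0 < w t - w t' by rewrite subr_gt0.
  by rewrite -(pmulr_rle0 _ gt0) anti.
by have := spread t t'; lra.
Qed.

End Rearrangement.

Section Variance.
Variables (R : realFieldType) (m : nat).
Implicit Types (f g : 'I_m -> R).

Lemma eq_Dmax f g : f =1 g -> Dmax f = Dmax g.
Proof.
move=> eq_fg; have eq_mean : meanY f = meanY g by congr (_ * _); exact: eq_bigr.
by congr (_ * _); apply: eq_bigr => t _; rewrite eq_fg eq_mean.
Qed.

Lemma sum_comp_perm (F : 'I_m -> R) (pi : {perm 'I_m}) : \sum_t F (pi t) = \sum_t F t.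
Proof. by rewrite [RHS](reindex_inj (@perm_inj _ pi)). Qed.

Lemma meanY_average_perm f (pi : {perm 'I_m}) :
  meanY (fun t => (f t + f (pi t)) / 2) = meanY f.
Proof.
rewrite /meanY -mulr_suml big_split /= sum_comp_perm.
by congr (_ * _); field.
Qed.

Lemma sum_sub_meanY f : (0 < m)%N -> \sum_t (f t - meanY f) = 0.
Proof.
move=> m_gt0; rewrite sumrB sumr_const card_ord /meanY -[(_ * _) *+ m]mulr_natr.
by rewrite mulrAC mulVf ?mul1r ?subrr // pnatr_eq0 -lt0n.
Qed.

Lemma Dmax_antisorted_average f pi : (0 < m)%N -> antisorted f pi ->
  Dmax (fun t => (f t + f (pi t)) / 2) <= Dmax f / 2.
Proof.
move=> m_gt0 anti; rewrite /Dmax meanY_average_perm.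
set v := fun t => f t - meanY f.
have v_sub i j : v i - v j = f i - f j by rewrite /v opprB addrA subrK.
have cross_le0 : \sum_t v t * v (pi t) <= 0.
  have m_pos : 0 < m%:R :> R by rewrite ltr0n.
  have := @chebyshev_sum_antitone R m v (fun t => v (pi t)).
  rewrite sum_sub_meanY // mul0r (pmulr_rle0 _ m_pos); apply=> i j.
  by rewrite !v_sub anti.
have expand t : ((f t + f (pi t)) / 2 - meanY f) ^+ 2 =
    4^-1 * (v t ^+ 2 + v (pi t) ^+ 2) + 2^-1 * (v t * v (pi t)).
  by rewrite /v; field.
rewrite (eq_bigr _ (fun t _ => expand t)) big_split -!mulr_sumr big_split /=.
rewrite (sum_comp_perm (fun t => v t ^+ 2)) -mulrA.
apply: ler_wpM2l; first by rewrite invr_ge0 ler0n.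
move: cross_le0; set A := \sum_t v t ^+ 2; set X := \sum_t v t * v (pi t).
lra.
Qed.

Lemma Dmax_le_sqr_spread f L : (0 < m)%N -> (forall t t', f t - f t' <= L) ->
  Dmax f <= L ^+ 2.
Proof.
move=> m_gt0 spread.
have m_pos : 0 < m%:R :> R by rewrite ltr0n.
have dev_le t : (f t - meanY f) ^+ 2 <= L ^+ 2.
  have mdev : m%:R * (f t - meanY f) = \sum_t' (f t - f t').
    rewrite sumrB sumr_const card_ord /meanY mulrBr mulrA mulfV ?mul1r ?mulr_natl //.
    by rewrite lt0r_neq0.
  have sum_L : \sum_(t' < m) L = m%:R * L by rewrite sumr_const card_ord mulr_natl.
  have up : m%:R * (f t - meanY f) <= m%:R * L.
    by rewrite mdev -sum_L ler_sum.
  have lo : m%:R * - L <= m%:R * (f t - meanY f).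
    rewrite mdev mulrN -sum_L -sumrN.
    by apply: ler_sum => t' _; rewrite lerNl opprB spread.
  rewrite ler_pM2l // in up; rewrite ler_pM2l // in lo; nra.
have sum_L2 : \sum_(t < m) L ^+ 2 = m%:R * L ^+ 2 by rewrite sumr_const card_ord mulr_natl.
rewrite /Dmax -[L ^+ 2](mulKf (lt0r_neq0 m_pos)).
by rewrite ler_wpM2l ?invr_ge0 ?ler0n // -sum_L2 ler_sum.
Qed.
End Variance.

Lemma sumr_const_seq (V : nmodType) (T : Type) (s : seq T) (x : V) :
  \sum_(p <- s) x = x *+ size s.
Proof. by rewrite big_const_seq count_predT iter_addr_0. Qed.

Lemma sum_sqr_split_avg (R : realFieldType) (T : Type) (s : seq T) (a : T -> R) (c : R) :
  (0 < size s)%N ->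
  let avg := (size s)%:R^-1 * \sum_(p <- s) a p in
  \sum_(p <- s) (a p - c) ^+ 2 =
  \sum_(p <- s) (a p - avg) ^+ 2 + (size s)%:R * (avg - c) ^+ 2.
Proof.
move=> s_gt0 avg.
have s_neq0 : (size s)%:R != 0 :> R by rewrite pnatr_eq0 -lt0n.
have expand p : (a p - c) ^+ 2 =
    (a p - avg) ^+ 2 + 2 * (avg - c) * (a p - avg) + (avg - c) ^+ 2 by ring.
have sum_dev : \sum_(p <- s) (a p - avg) = 0.
  rewrite sumrB sumr_const_seq -mulr_natl /avg.
  by rewrite mulrA mulfV ?mul1r ?subrr.
rewrite (eq_bigr _ (fun p _ => expand p)) !big_split /= -mulr_sumr sum_dev mulr0 addr0.
by rewrite sumr_const_seq mulr_natl.
Qed.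

Lemma diam_ge (R : realFieldType) (m : nat) (y : 'I_m -> R) i j : y i - y j <= diam y.
Proof.
exact: le_trans (le_bigmax _ (fun j => y i - y j) j)
  (le_bigmax _ (fun i => \big[Num.max/0]_(j < m) (y i - y j)) i).
Qed.

Section PermutationSchemes.
Variables (R : realFieldType) (m : nat) (y : 'I_m -> R).
Implicit Types (s : seq {perm 'I_m}) (f : 'I_m -> R).

Definition posterior_mean s t : R := (size s)%:R^-1 * \sum_(p <- s) y (p t).

Definition perm_scheme k s : 'I_(2 ^ k) -> 'I_m -> 'I_m :=
  fun key => (nth 1 s key)^-1%g.
Arguments perm_scheme : clear implicits.

Lemma perm_scheme_is_scheme k s : is_scheme (perm_scheme k s).
Proof. by move=> key; exact: perm_inj. Qed.

Lemma distortion_perm_scheme k s f : size s = (2 ^ k)%N ->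
  distortion y (perm_scheme k s) f =
  (m%:R * (size s)%:R)^-1 * \sum_t \sum_(p <- s) (y (p t) - f t) ^+ 2.
Proof.
move=> size_s; rewrite /distortion size_s; congr (_ * _).
rewrite exchange_big [RHS]exchange_big /=.
rewrite [RHS](big_nth 1%g) size_s big_mkord.
apply: eq_bigr => key _; rewrite (reindex_inj (@perm_inj _ (nth 1%g s key))) /=.
by apply: eq_bigr => t _; rewrite /perm_scheme permK.
Qed.

Lemma meanY_posterior_mean s : (0 < size s)%N -> meanY (posterior_mean s) = meanY y.
Proof.
move=> s_gt0; rewrite /meanY /posterior_mean -mulr_sumr exchange_big /=.
rewrite (eq_bigr (fun _ => \sum_i y i)) => [|p _]; last exact: sum_comp_perm.
rewrite sumr_const_seq -(mulr_natl (\sum_i y i)); congr (_ * _).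
by rewrite mulrA mulVf ?mul1r // pnatr_eq0 -lt0n.
Qed.

Lemma distortion_perm_scheme_split k s f : size s = (2 ^ k)%N ->
  distortion y (perm_scheme k s) f =
  distortion y (perm_scheme k s) (posterior_mean s) +
  m%:R^-1 * \sum_t (posterior_mean s t - f t) ^+ 2.
Proof.
move=> size_s; have s_gt0 : (0 < size s)%N by rewrite size_s expn_gt0.
rewrite !(distortion_perm_scheme _ size_s).
under eq_bigr => t _.
  by rewrite (sum_sqr_split_avg (fun p : {perm 'I_m} => y (p t)) (f t) s_gt0); over.
rewrite big_split mulrDr -mulr_sumr; congr (_ + _).
by rewrite invfM -mulrA mulKf // pnatr_eq0 -lt0n.
Qed.

Lemma distortion_perm_scheme_meanY k s : size s = (2 ^ k)%N ->
  distortion y (perm_scheme k s) (fun=> meanY y) = Dmax y.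
Proof.
move=> size_s; rewrite (distortion_perm_scheme _ size_s) exchange_big /=.
rewrite (eq_bigr (fun _ => \sum_i (y i - meanY y) ^+ 2)) => [|p _]; last first.
  exact: (sum_comp_perm (fun i => (y i - meanY y) ^+ 2)).
rewrite sumr_const_seq -(mulr_natl (\sum_i (y i - meanY y) ^+ 2)).
by rewrite invfM -mulrA mulKf // pnatr_eq0 size_s expn_eq0.
Qed.

Lemma is_Dach_perm_scheme k s : size s = (2 ^ k)%N ->
  is_Dach y (perm_scheme k s) (Dmax y - Dmax (posterior_mean s)).
Proof.
move=> size_s; have s_gt0 : (0 < size s)%N by rewrite size_s expn_gt0.
have optimal : distortion y (perm_scheme k s) (posterior_mean s) =
    Dmax y - Dmax (posterior_mean s).
  rewrite -(distortion_perm_scheme_meanY size_s).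
  rewrite (distortion_perm_scheme_split (fun=> meanY y) size_s) /Dmax.
  by rewrite meanY_posterior_mean // addrK.
split; first by exists (posterior_mean s).
move=> f; rewrite -optimal (distortion_perm_scheme_split f size_s) lerDl.
by rewrite mulr_ge0 ?invr_ge0 ?ler0n ?sumr_ge0 // => t _; rewrite sqr_ge0.
Qed.

Lemma posterior_mean_cat_shift s (pi : {perm 'I_m}) t : (0 < size s)%N ->
  posterior_mean (s ++ map (mulg pi) s) t =
  (posterior_mean s t + posterior_mean s (pi t)) / 2.
Proof.
move=> s_gt0; rewrite /posterior_mean size_cat size_map big_cat big_map /=.
under [X in _ + X]eq_bigr => p _ do rewrite permM.
have s_neq0 : (size s)%:R != 0 :> R by rewrite pnatr_eq0 -lt0n.
rewrite natrD; field.
by rewrite s_neq0 -natrD pnatr_eq0 addn_eq0 negb_and -lt0n s_gt0.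
Qed.

End PermutationSchemes.
Arguments perm_scheme {m} k s.

Lemma exists_halving_perm_seq (R : realFieldType) (m : nat) (y : 'I_m -> R) k :
  (0 < m)%N ->
  exists s : seq {perm 'I_m}, [/\ size s = (2 ^ k)%N,
    Dmax (posterior_mean y s) <= Dmax y / (2 ^ k)%N%:R &
    forall t t', posterior_mean y s t - posterior_mean y s t' <= diam y / (2 ^ k)%N%:R].
Proof.
move=> m_gt0; elim: k => [|k [s [size_s Dmax_s spread_s]]].
  have post1 t : posterior_mean y [:: 1%g] t = y t.
    by rewrite /posterior_mean big_seq1 perm1 invr1 mul1r.
  exists [:: 1%g]; rewrite expn0 !divr1; split => //.
  - by rewrite (eq_Dmax post1).
  - by move=> t t'; rewrite !post1 diam_ge.
have halve (x : R) : x / (2 ^ k.+1)%N%:R = x / (2 ^ k)%N%:R / 2.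
  by rewrite expnSr natrM invfM mulrA.
have s_gt0 : (0 < size s)%N by rewrite size_s expn_gt0.
have [pi anti] := exists_antisorting_perm (posterior_mean y s).
exists (s ++ map (mulg pi) s).
have post_cat := posterior_mean_cat_shift y (s := s) pi ^~ s_gt0.
split.
- by rewrite size_cat size_map size_s addnn -mul2n expnS.
- rewrite (eq_Dmax post_cat) halve.
  apply: le_trans (Dmax_antisorted_average m_gt0 anti) _.
  by rewrite ler_pM2r ?invr_gt0 ?ltr0n.
- move=> t t'; rewrite !post_cat halve.
  exact: antisorted_average_spread anti spread_s t t'.
Qed.

Theorem theorem1 (R : realFieldType) (m k : nat) (y : 'I_m -> R) :
  (0 < m)%N -> injective y ->
  (exists sigma : 'I_(2 ^ k) -> 'I_m -> 'I_m, is_scheme sigma /\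
     exists D : R, is_Dach y sigma D /\
       Dmax y - D <= Dmax y / (2 ^ k)%N%:R) /\
  (exists sigma : 'I_(2 ^ k) -> 'I_m -> 'I_m, is_scheme sigma /\
     exists D : R, is_Dach y sigma D /\
       Dmax y - D <= diam y ^+ 2 / (2 ^ (2 * k))%N%:R).
Proof.
move=> m_gt0 _.
have [s [size_s Dmax_s spread_s]] := exists_halving_perm_seq y k m_gt0.
have scheme_s := @perm_scheme_is_scheme m k s.
have Dach_s := is_Dach_perm_scheme y size_s.
have gain := subKr (Dmax y) (Dmax (posterior_mean y s)).
split; exists (perm_scheme k s); split => //;
  exists (Dmax y - Dmax (posterior_mean y s)); rewrite gain; split => //.
rewrite mulnC expnM natrX -expr_div_n.
exact: Dmax_le_sqr_spread m_gt0 spread_s.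
Qed.
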